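(* For all integers $N\ge1$ and $d\ge1$, $\mathcal{Q}_{N,1}^d\subseteq\mathcal{Q}_{N,1}^{N+1}$.
   Context: $\mathcal{Q}_{N,1}^d$ is the set of behaviors $(P(a|\mathbf{x}))_{a\in\{0,1\},\mathbf{x}\in\{0,1\}^N}$ of the form $P(a|\mathbf{x})=\mathrm{Tr}[\Pi_aU_{\mathbf{x}}\rho U_{\mathbf{x}}^\dagger]$, where $\rho$ is a density operator on $\mathbb{C}^N\otimes\mathbb{C}^d$ (independent of $\mathbf{x}$), $U_{\mathbf{x}}=\sum_{j=1}^N|j\rangle\langle j|\otimes U_j^{(x_j)}$ for arbitrary unitaries $U_j^{(0)},U_j^{(1)}$ on $\mathbb{C}^d$, $\{|j\rangle\}$ is the standard basis of $\mathbb{C}^N$, and $\{\Pi_0,\Pi_1\}$ is an arbitrary two-outcome POVM on $\mathbb{C}^N\otimes\mathbb{C}^d$. *)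

From HB Require Import structures.
From mathcomp Require Import all_boot all_order all_algebra.
From mathcomp Require Import reals.
From mathcomp.real_closed Require Import complex mxtens.
Set Implicit Arguments.
Unset Strict Implicit.
Unset Printing Implicit Defensive.
Import Order.TTheory GRing.Theory Num.Theory.
Local Open Scope ring_scope.

Section QDefs.
Variable R : realType.
Local Notation C := (R[i]).

Definition adj {m n : nat} (A : 'M[C]_(m, n)) : 'M[C]_(n, m) :=
  map_mx (fun z => z^*) A^T.

Definition unitary {n : nat} (U : 'M[C]_n) : Prop :=
  U *m adj U = 1%:M /\ adj U *m U = 1%:M.

Definition psd {n : nat} (A : 'M[C]_n) : Prop :=
  forall v : 'cV[C]_n, 0 <= (adj v *m A *m v) 0 0.

Definition density {n : nat} (rho : 'M[C]_n) : Prop :=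
  psd rho /\ \tr rho = 1.

(* two-outcome POVM {Pi false, Pi true} = {Pi_0, Pi_1} *)
Definition povm2 {n : nat} (Pi : bool -> 'M[C]_n) : Prop :=
  psd (Pi false) /\ psd (Pi true) /\ Pi false + Pi true = 1%:M.

Definition ctrlU {N d : nat} (U : 'I_N -> bool -> 'M[C]_d)
  (x : {ffun 'I_N -> bool}) : 'M[C]_(N * d) :=
  \sum_(j < N) tensmx (delta_mx j j : 'M[C]_N) (U j (x j)).

(* behaviors P(a|x) with a in {0,1} (= bool), x in {0,1}^N *)
Definition behavior (N : nat) := bool -> {ffun 'I_N -> bool} -> C.

Definition Q_N1 (N d : nat) (P : behavior N) : Prop :=
  exists (rho : 'M[C]_(N * d)) (U : 'I_N -> bool -> 'M[C]_d)
         (Pi : bool -> 'M[C]_(N * d)),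
    density rho /\ (forall j b, unitary (U j b)) /\ povm2 Pi /\
    forall a x, P a x = \tr (Pi a *m (ctrlU U x *m rho *m adj (ctrlU U x))).

End QDefs.

(* Write rho = A A^* and view the matrices of size (N d) x (N d) as a Hilbert
   space under the Hilbert-Schmidt product.  For the branch j, the vectors
   X_j = (|j><j| (x) U_j^0) A and Y_j = (|j><j| (x) U_j^1) A have the same norm,
   and vectors from different branches are orthogonal.  Choosing a phase l_j
   that makes <X_j, l_j Y_j> real, the vectors X_j + l_j Y_j and X_j - l_j Y_j
   are orthogonal too, and
     X_j = ((X_j + l_j Y_j) + (X_j - l_j Y_j)) / 2,
     Y_j = l_j^* ((X_j + l_j Y_j) - (X_j - l_j Y_j)) / 2.
   Hence every U_x A is a combination of the 2N orthogonal vectors X_j +- l_j Y_j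
   whose coefficients are unimodular and depend only on (j, x_j).  This is
   reproduced with a two-level register per branch: the amplitudes of the new
   state are the norms |X_j +- l_j Y_j| / 2, the new unitaries are diagonal
   phases, and the new POVM is the Gram matrix of Pi_a in the normalized
   vectors, completed by the identity on the indices of zero vectors.  So in
   fact Q_{N,1}^d is contained in Q_{N,1}^D for every D >= 2. *)

From HB Require Import structures.
From mathcomp Require Import all_boot all_order all_algebra.
From mathcomp Require Import reals ring.
From mathcomp.real_closed Require Import complex mxtens.
Set Implicit Arguments.
Unset Strict Implicit.
Unset Printing Implicit Defensive.
Import Order.TTheory GRing.Theory Num.Theory Num.Def.
Local Open Scope ring_scope.

Section Adjoint.
Variable R : realType.
Local Notation C := (R[i]).

Lemma adjE m n (A : 'M[C]_(m, n)) i j : adj A i j = (A j i)^*.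
Proof. by rewrite !mxE. Qed.

Lemma adjK m n (A : 'M[C]_(m, n)) : adj (adj A) = A.
Proof. exact: trmxCK. Qed.

Lemma adjM m n p (A : 'M[C]_(m, n)) (B : 'M[C]_(n, p)) :
  adj (A *m B) = adj B *m adj A.
Proof. by rewrite /adj trmx_mul map_mxM. Qed.

Lemma adj_sum m n (I : finType) (F : I -> 'M[C]_(m, n)) :
  adj (\sum_i F i) = \sum_i adj (F i).
Proof. by rewrite /adj !raddf_sum. Qed.

Lemma adj_delta m n (i : 'I_m) (j : 'I_n) :
  adj (delta_mx i j : 'M[C]_(m, n)) = delta_mx j i.
Proof. by rewrite /adj trmx_delta map_delta_mx. Qed.

Lemma adj_diag n (r : 'rV[C]_n) : adj (diag_mx r) = diag_mx (map_mx conjC r).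
Proof. by rewrite /adj tr_diag_mx map_diag_mx. Qed.

Lemma adj_tens m n p q (A : 'M[C]_(m, n)) (B : 'M[C]_(p, q)) :
  adj (A *t B) = adj A *t adj B.
Proof. by rewrite /adj trmx_tens map_mxT. Qed.

End Adjoint.

Section HilbertSchmidt.
Variable R : realType.
Local Notation C := (R[i]).

Definition hsdot m n (X Y : 'M[C]_(m, n)) : C := \tr (adj X *m Y).

Definition hsnorm m n (X : 'M[C]_(m, n)) : C := sqrtC (hsdot X X).

Definition normalize m n (X : 'M[C]_(m, n)) := (hsnorm X)^-1 *: X.

Lemma hsdotE m n (X Y : 'M[C]_(m, n)) :
  hsdot X Y = \sum_i \sum_k (X i k)^* * Y i k.
Proof.
rewrite /hsdot /mxtrace exchange_big; apply: eq_bigr => k _; rewrite mxE.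
by apply: eq_bigr => i _; rewrite adjE.
Qed.

Lemma hsdotC m n (X Y : 'M[C]_(m, n)) : hsdot X Y = (hsdot Y X)^*.
Proof.
rewrite !hsdotE !rmorph_sum; apply: eq_bigr => i _; rewrite rmorph_sum.
by apply: eq_bigr => k _; rewrite rmorphM /= conjCK mulrC.
Qed.

Lemma hsdotDr m n (X Y Z : 'M[C]_(m, n)) : hsdot X (Y + Z) = hsdot X Y + hsdot X Z.
Proof. by rewrite /hsdot mulmxDr mxtraceD. Qed.

Lemma hsdotZr m n c (X Y : 'M[C]_(m, n)) : hsdot X (c *: Y) = c * hsdot X Y.
Proof. by rewrite /hsdot -scalemxAr mxtraceZ. Qed.

Lemma hsdot0r m n (X : 'M[C]_(m, n)) : hsdot X 0 = 0.
Proof. by rewrite /hsdot mulmx0 mxtrace0. Qed.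

Lemma hsdot_sumr m n (I : finType) (X : 'M[C]_(m, n)) (F : I -> 'M[C]_(m, n)) :
  hsdot X (\sum_i F i) = \sum_i hsdot X (F i).
Proof. by rewrite /hsdot mulmx_sumr raddf_sum. Qed.

Lemma hsdotDl m n (X Y Z : 'M[C]_(m, n)) : hsdot (X + Y) Z = hsdot X Z + hsdot Y Z.
Proof. by rewrite hsdotC hsdotDr rmorphD /= -!hsdotC. Qed.

Lemma hsdotZl m n c (X Y : 'M[C]_(m, n)) : hsdot (c *: X) Y = c^* * hsdot X Y.
Proof. by rewrite hsdotC hsdotZr rmorphM /= -hsdotC. Qed.

Lemma hsdot0l m n (X : 'M[C]_(m, n)) : hsdot 0 X = 0.
Proof. by rewrite hsdotC hsdot0r rmorph0. Qed.

Lemma hsdot_suml m n (I : finType) (X : 'M[C]_(m, n)) (F : I -> 'M[C]_(m, n)) :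
  hsdot (\sum_i F i) X = \sum_i hsdot (F i) X.
Proof.
by rewrite hsdotC hsdot_sumr rmorph_sum /=; apply: eq_bigr => i _; rewrite -hsdotC.
Qed.

Lemma hsdot_mulmxl m n p (B : 'M[C]_(p, m)) (X : 'M[C]_(m, n)) Y :
  hsdot (B *m X) Y = hsdot X (adj B *m Y).
Proof. by rewrite /hsdot adjM mulmxA. Qed.

Lemma hsdot_col n (u v : 'cV[C]_n) : hsdot u v = (adj u *m v) 0 0.
Proof. by rewrite /hsdot /mxtrace big_ord1. Qed.

Lemma hsdot_ge0 m n (X : 'M[C]_(m, n)) : 0 <= hsdot X X.
Proof.
rewrite hsdotE; do 2![apply: sumr_ge0 => ? _].
by rewrite mulrC mul_conjC_ge0.
Qed.

Lemma hsdot_eq0 m n (X : 'M[C]_(m, n)) : (hsdot X X == 0) = (X == 0).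
Proof.
apply/idP/eqP => [|->]; last by rewrite hsdot0r.
have ge0 i k : 0 <= (X i k)^* * X i k by rewrite mulrC mul_conjC_ge0.
rewrite hsdotE psumr_eq0 => [/allP X0|i _]; last exact: sumr_ge0.
apply/matrixP => i k; rewrite mxE; apply/eqP.
move: (X0 i (mem_index_enum _)); rewrite /= psumr_eq0 //.
by move=> /allP /(_ k (mem_index_enum _)); rewrite mulrC mul_conjC_eq0.
Qed.

Lemma psd_hsdot n m (P : 'M[C]_n) (X : 'M[C]_(n, m)) : psd P -> 0 <= hsdot X (P *m X).
Proof.
move=> P_psd; rewrite /hsdot /mxtrace; apply: sumr_ge0 => k _.
have col_mul : P *m col k X = col k (P *m X) by rewrite !colE mulmxA.
have := P_psd (col k X); rewrite -mulmxA col_mul.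
by congr (_ <= _); rewrite !mxE; apply: eq_bigr => l _; rewrite !mxE.
Qed.

Lemma hsnorm_conj m n (X : 'M[C]_(m, n)) : (hsnorm X)^* = hsnorm X.
Proof. by rewrite conj_Creal // sqrtC_real // hsdot_ge0. Qed.

Lemma hsnorm_eq0 m n (X : 'M[C]_(m, n)) : (hsnorm X == 0) = (X == 0).
Proof. by rewrite sqrtC_eq0 hsdot_eq0. Qed.

Lemma normalizeK m n (X : 'M[C]_(m, n)) : hsnorm X *: normalize X = X.
Proof.
have [/eqP X0|X0] := eqVneq (hsnorm X) 0.
  by move: X0; rewrite hsnorm_eq0 => /eqP ->; rewrite /normalize !scaler0.
by rewrite scalerA mulfV ?scale1r.
Qed.

Lemma hsdot_normalize m n (X : 'M[C]_(m, n)) :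
  hsdot (normalize X) (normalize X) = (X != 0)%:R.
Proof.
rewrite hsdotZl hsdotZr fmorphV /= hsnorm_conj -hsnorm_eq0.
have [->|X0] := eqVneq (hsnorm X) 0; first by rewrite invr0 mul0r.
by rewrite -[hsdot X X]sqrtCK -/(hsnorm X) expr2 mulKf // mulVf.
Qed.

Lemma hsdot_col_mulmx n (M : 'M[C]_n) (u v : 'cV[C]_n) :
  hsdot u (M *m v) = \sum_p \sum_q (u p 0)^* * (M p q * v q 0).
Proof.
rewrite hsdotE; apply: eq_bigr => p _; rewrite big_ord1 mxE mulr_sumr.
by apply: eq_bigr => q _.
Qed.

Lemma trace_sandwich n m (B X : 'M[C]_n) (Y : 'M[C]_(n, m)) :
  \tr (B *m (X *m (Y *m adj Y) *m adj X)) = hsdot (X *m Y) (B *m (X *m Y)).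
Proof. by rewrite /hsdot adjM [RHS]mxtrace_mulC !mulmxA. Qed.

Lemma hsdot_povm_sum n m (Pi : bool -> 'M[C]_n) (X : 'M[C]_(n, m)) :
  Pi false + Pi true = 1%:M -> hsdot X (Pi false *m X) + hsdot X (Pi true *m X) = hsdot X X.
Proof. by move=> Pi_sum; rewrite -hsdotDr -mulmxDl Pi_sum mul1mx. Qed.

Lemma hsdot_unitary n m (W : 'M[C]_n) (X : 'M[C]_(n, m)) :
  adj W *m W = 1%:M -> hsdot (W *m X) (W *m X) = hsdot X X.
Proof. by move=> WW; rewrite hsdot_mulmxl mulmxA WW mul1mx. Qed.

End HilbertSchmidt.

Section Psd.
Variable R : realType.
Local Notation C := (R[i]).

Lemma psd_herm n (P : 'M[C]_n) : psd P -> adj P = P.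
Proof.
move=> P_psd; apply/matrixP => i k; rewrite adjE.
pose e l : 'cV[C]_n := delta_mx l 0.
pose f (v : 'cV[C]_n) := hsdot v (P *m v).
have f_real v : f v \is Num.real.
  by apply: ger0_real; rewrite /f hsdot_col mulmxA.
have dot_e l l' : hsdot (e l) (P *m e l') = P l l'.
  by rewrite hsdot_col adj_delta mulmxA -rowE -colE !mxE.
have polar c : c * P i k + c^* * P k i = f (e i + c *: e k) - f (e i) - c^* * c * f (e k).
  by rewrite /f mulmxDr -!scalemxAr !(hsdotDl, hsdotDr, hsdotZl, hsdotZr) !dot_e; ring.
have polar_real c : c^* * c = 1 -> c * P i k + c^* * P k i \is Num.real.
  by move=> c_unit; rewrite polar c_unit mul1r !rpredB.
have i_unit : 'i^* * 'i = 1 :> C by rewrite conjCi mulNr -expr2 sqrCi opprK.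
have one_unit : 1^* * 1 = 1 :> C by rewrite conjC1 mulr1.
have /CrealP := polar_real _ i_unit.
rewrite rmorphD !rmorphM /= conjCK !conjCi !mulNr addrC -!mulrBr => /(mulfI (neq0Ci _)).
have /CrealP := polar_real _ one_unit.
rewrite conjC1 !mul1r rmorphD /=.
set s := P i k; set t := P k i => sum_eq diff_eq.
have two : (2 : C) != 0 by rewrite pnatr_eq0.
apply: (mulfI two); transitivity ((s^* + t^*) + (t^* - s^*)); first by ring.
by rewrite sum_eq diff_eq; ring.
Qed.

Lemma psd_mul_adj n m (B : 'M[C]_(n, m)) : psd (B *m adj B).
Proof.
move=> v; rewrite mulmxA -mulmxA.
have -> : adj v *m B = adj (adj B *m v) by rewrite adjM adjK.
by rewrite -hsdot_col hsdot_ge0.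
Qed.

Lemma psd_factor n (P : 'M[C]_n) : psd P -> exists A : 'M[C]_n, P = A *m adj A.
Proof.
move=> P_psd; have P_normal : P \is normalmx.
  by apply/normalmxP; change (P *m adj P = adj P *m P); rewrite psd_herm.
set Q := spectralmx P; set sp := spectral_diag P.
have Q_unitary : Q \is unitarymx := spectral_unitarymx P.
have QQ : Q *m adj Q = 1%:M by apply/unitarymxP.
have P_diag : P = adj Q *m diag_mx sp *m Q.
  by move/orthomx_spectralP: P_normal; rewrite invmx_unitary.
have sp_ge0 j : 0 <= sp 0 j.
  have := P_psd (adj Q *m delta_mx j 0).
  rewrite adjM adjK adj_delta P_diag !mulmxA !(mulmxtVK _ Q_unitary).
  by rewrite -rowE -colE !mxE eqxx mulr1n.
exists (adj Q *m diag_mx (map_mx sqrtC sp)).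
rewrite adjM adjK adj_diag P_diag -!mulmxA; congr (_ *m _).
rewrite mulmxA mulmx_diag; congr (diag_mx _ *m _).
apply/rowP => j; rewrite !mxE conj_Creal ?sqrtC_real // -expr2 sqrtCK //.
Qed.

End Psd.

Section Phase.
Variable R : realType.
Local Notation C := (R[i]).

Definition phase (z : C) : C := if z == 0 then 1 else z^* / `|z|.

Lemma phase_unit z : (phase z)^* * phase z = 1.
Proof.
rewrite /phase; case: eqP => [_|/eqP z0]; first by rewrite rmorph1 mulr1.
rewrite rmorphM fmorphV /= conjCK (conj_Creal (normr_real _)).
by rewrite mulrACA -normCK -expr2 exprVn mulfV // expf_eq0 normr_eq0.
Qed.

Lemma phaseM z : phase z * z = `|z|.
Proof.
rewrite /phase; case: eqP => [->|/eqP z0]; first by rewrite mulr0 normr0.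
by rewrite mulrAC -normCKC expr2 mulfK ?normr_eq0.
Qed.

Lemma hsdot_phase_orth m n (X Y : 'M[C]_(m, n)) :
  hsdot X X = hsdot Y Y ->
  hsdot (X + phase (hsdot X Y) *: Y) (X - phase (hsdot X Y) *: Y) = 0.
Proof.
move=> XY_norm; set l := phase _.
have l_unit : l^* * l = 1 := phase_unit _.
have l_real : (l * hsdot X Y)^* = l * hsdot X Y.
  by rewrite phaseM conj_Creal ?normr_real.
rewrite -scaleNr !(hsdotDl, hsdotDr, hsdotZl, hsdotZr) -XY_norm.
rewrite [hsdot Y X]hsdotC; move: l_real; rewrite rmorphM /= => ->.
transitivity (hsdot X X * (1 - l^* * l)); first by ring.
by rewrite l_unit subrr mulr0.
Qed.

End Phase.

Section GramPovm.
Variable R : realType.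
Local Notation C := (R[i]).
Variables (k m n : nat) (G : 'I_n -> 'M[C]_(k, m)) (Pi : bool -> 'M[C]_k).
Hypothesis G_orth : forall p q, p != q -> hsdot (G p) (G q) = 0.

Local Notation F p := (normalize (G p)).

Definition gram_povm (a : bool) : 'M[C]_n :=
  \matrix_(p, q) (hsdot (F p) (Pi a *m F q) + [&& a, p == q & G p == 0]%:R).

Lemma hsdot_normalize_gram p q : hsdot (F p) (F q) = ((p == q) && (G p != 0))%:R.
Proof.
have [<-|pq] := eqVneq p q; first exact: hsdot_normalize.
by rewrite hsdotZl hsdotZr G_orth // !mulr0.
Qed.

Lemma gram_povm_form a (v : 'cV[C]_n) :
  hsdot v (gram_povm a *m v) =
  hsdot (\sum_p v p 0 *: F p) (Pi a *m \sum_p v p 0 *: F p) +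
  a%:R * \sum_p (G p == 0)%:R * ((v p 0)^* * v p 0).
Proof.
rewrite hsdot_col_mulmx.
under eq_bigr do (under eq_bigr do rewrite mxE mulrDl mulrDr; rewrite big_split).
rewrite big_split /=; congr (_ + _).
  rewrite hsdot_suml; apply: eq_bigr => p _.
  rewrite hsdotZl mulmx_sumr hsdot_sumr mulr_sumr; apply: eq_bigr => q _.
  by rewrite -(scalemxAr (v q 0)) hsdotZr (mulrC (v q 0)).
rewrite mulr_sumr; apply: eq_bigr => p _.
rewrite (bigD1 p) //= big1 => [|q qp]; last by rewrite eq_sym (negPf qp) andbF mul0r mulr0.
by rewrite eqxx addr0; case: a; case: (G p == 0) => /=; ring.
Qed.

Lemma gram_povm_psd a : psd (Pi a) -> psd (gram_povm a).
Proof.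
move=> Pi_psd v; rewrite -mulmxA -hsdot_col gram_povm_form.
apply: addr_ge0; first exact: psd_hsdot.
apply: mulr_ge0 => //; apply: sumr_ge0 => p _.
by apply: mulr_ge0 => //; rewrite mulrC mul_conjC_ge0.
Qed.

Lemma gram_povm_sum : Pi false + Pi true = 1%:M ->
  gram_povm false + gram_povm true = 1%:M.
Proof.
move=> Pi_sum; apply/matrixP => p q; rewrite !mxE /= addr0 addrA.
rewrite -hsdotDr -mulmxDl Pi_sum mul1mx hsdot_normalize_gram.
by case: (p == q); case: (G p == 0); rewrite /= ?(addr0, add0r, mulr0n).
Qed.

Lemma gram_povm_behavior a (w : 'I_n -> C) (v : 'cV[C]_n) :
  (forall p, v p 0 = w p * hsnorm (G p)) ->
  hsdot v (gram_povm a *m v) =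
  hsdot (\sum_p w p *: G p) (Pi a *m \sum_p w p *: G p).
Proof.
move=> vE; have vG0 p : G p = 0 -> v p 0 = 0.
  by move=> G0; rewrite vE /hsnorm G0 hsdot0r sqrtC0 mulr0.
rewrite gram_povm_form; have -> : \sum_p (G p == 0)%:R * ((v p 0)^* * v p 0) = 0.
  by apply: big1 => p _; case: eqP => [/vG0 ->|_]; rewrite ?mulr0 ?mul0r.
by rewrite mulr0 addr0; under eq_bigr do rewrite vE -scalerA normalizeK.
Qed.

End GramPovm.

Lemma mxtens_index_eq m n (i k : 'I_m) (j l : 'I_n) :
  (mxtens_index (i, j) == mxtens_index (k, l)) = ((i, j) == (k, l)).
Proof. exact/inj_eq/can_inj/mxtens_indexK. Qed.

Lemma sum_mxtens (V : nmodType) m n (F : 'I_(m * n) -> V) :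
  \sum_p F p = \sum_(i < m) \sum_(j < n) F (mxtens_index (i, j)).
Proof.
rewrite pair_big /= (reindex (@mxtens_index m n)) /=; last first.
  by exists (@mxtens_unindex m n) => p _; rewrite ?mxtens_indexK ?mxtens_unindexK.
by apply: eq_bigr => -[i j].
Qed.

Section Controlled.
Variable R : realType.
Local Notation C := (R[i]).
Variables (N d : nat).

Lemma adj_ctrl_mul (j k : 'I_N) (V W : 'M[C]_d) :
  adj ((delta_mx j j : 'M[C]_N) *t V) *m (delta_mx k k *t W) =
  (delta_mx j k *t (adj V *m W)) *+ (j == k).
Proof.
rewrite adj_tens tensmx_mul adj_delta mul_delta_mx_cond.
by case: (j == k); rewrite ?tens0mx.
Qed.

Lemma ctrl_sumE (M : 'I_N -> 'M[C]_d) j s k t :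
  (\sum_i (delta_mx i i : 'M[C]_N) *t M i) (mxtens_index (j, s)) (mxtens_index (k, t)) =
  (j == k)%:R * M j s t.
Proof.
rewrite summxE (bigD1 j) //= big1 => [|i ij]; last by rewrite tensmxE mxE eq_sym (negPf ij) mul0r.
by rewrite addr0 tensmxE mxE eqxx eq_sym.
Qed.

Lemma ctrlU_unitary (U : 'I_N -> bool -> 'M[C]_d) x :
  (forall j b, unitary (U j b)) -> adj (ctrlU U x) *m ctrlU U x = 1%:M.
Proof.
move=> U_unitary; rewrite /ctrlU adj_sum mulmx_suml.
transitivity (\sum_j (delta_mx j j : 'M[C]_N) *t (1%:M : 'M[C]_d)).
  apply: eq_bigr => j _; rewrite mulmx_sumr (bigD1 j) //= big1 ?addr0 => [|k kj].
    by rewrite adj_ctrl_mul eqxx (proj2 (U_unitary _ _)).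
  by rewrite adj_ctrl_mul eq_sym (negPf kj).
apply/matrixP => p q.
case: (mxtens_indexP p) => j s; case: (mxtens_indexP q) => k t.
rewrite (ctrl_sumE (fun=> 1%:M)) !mxE mxtens_index_eq xpair_eqE.
by case: (j == k); rewrite ?mul0r ?mul1r.
Qed.

Lemma ctrlU_diag (y : 'I_N -> bool -> 'rV[C]_d) x :
  ctrlU (fun j b => diag_mx (y j b)) x =
  diag_mx (\row_p y (mxtens_unindex p).1 (x (mxtens_unindex p).1) 0 (mxtens_unindex p).2).
Proof.
apply/matrixP => p q.
case: (mxtens_indexP p) => j s; case: (mxtens_indexP q) => k t.
rewrite (ctrl_sumE (fun j => diag_mx (y j (x j)))) !mxE mxtens_indexK mxtens_index_eq xpair_eqE /=.
by case: (j == k); rewrite /= ?mul0r ?mul1r ?mulr0n.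
Qed.

End Controlled.

Section Construction.
Variable R : realType.
Local Notation C := (R[i]).
Variables (N d D' : nat) (U : 'I_N -> bool -> 'M[C]_d) (A : 'M[C]_(N * d)).
Hypothesis U_unitary : forall j b, unitary (U j b).
Local Notation D := D'.+2.
Local Notation ui := (@mxtens_unindex N D).

Definition branch j b : 'M[C]_(N * d) := ((delta_mx j j : 'M[C]_N) *t U j b) *m A.

Definition branch_phase j := phase (hsdot (branch j false) (branch j true)).

(* Only s = 0, 1 carry a vector; the other basis states of C^D are padding. *)
Definition branch_mix j (s : 'I_D) : 'M[C]_(N * d) :=
  (s < 2)%:R *: (branch j false + ((-1) ^+ s * branch_phase j) *: branch j true).

Definition mix_phase j (b : bool) (s : 'I_D) : C :=
  if b then (-1) ^+ s * (branch_phase j)^* else 1.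

Lemma hsdot_branch_neq j k : j != k -> forall b c, hsdot (branch j b) (branch k c) = 0.
Proof.
by move=> jk b c; rewrite hsdot_mulmxl mulmxA adj_ctrl_mul (negPf jk) mul0mx hsdot0r.
Qed.

Lemma hsdot_branch_norm j b :
  hsdot (branch j b) (branch j b) = hsdot A (((delta_mx j j : 'M_N) *t 1%:M) *m A).
Proof. by rewrite hsdot_mulmxl mulmxA adj_ctrl_mul eqxx (proj2 (U_unitary _ _)). Qed.

Lemma branch_mix_orth j k s t :
  (j, s) != (k, t) -> hsdot (branch_mix j s) (branch_mix k t) = 0.
Proof.
have [<-|jk _] := eqVneq j k; last first.
  by rewrite !(hsdotZl, hsdotZr, hsdotDl, hsdotDr, hsdot_branch_neq jk, mulr0, add0r).
have := hsdot_phase_orth (etrans (hsdot_branch_norm j false) (esym (hsdot_branch_norm j true))).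
rewrite xpair_eqE eqxx -val_eqE /branch_mix -/(branch_phase j).
move: (branch j false) (branch j true) (branch_phase j) => X Y l orth.
case: s t => [[|[|s]] ?] [[|[|t]] ?] //= _; rewrite ?scale0r ?hsdot0l ?hsdot0r //.
  by rewrite !scale1r expr0 expr1 mul1r mulN1r scaleNr.
by rewrite hsdotC !scale1r expr0 expr1 mul1r mulN1r scaleNr orth conjC0.
Qed.

Lemma branch_mix_sum j b : \sum_s (mix_phase j b s / 2) *: branch_mix j s = branch j b.
Proof.
rewrite !big_ord_recl big1 => [|s _]; last by rewrite /branch_mix ltnNge ltnS lift0 scale0r scaler0.
rewrite /branch_mix /mix_phase /bump /= expr0 expr1 !scale1r addr0 mul1r mulN1r.
have := phase_unit (hsdot (branch j false) (branch j true)); rewrite -/(branch_phase j).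
have two : (2 : C) != 0 by rewrite pnatr_eq0.
case: b; move: (branch j false) (branch j true) (branch_phase j) => X Y l l_unit;
  apply/matrixP => r c; rewrite !mxE; last by field.
by transitivity (l^* * l * Y r c); [field | rewrite l_unit mul1r].
Qed.

Definition mix_unitary j b : 'M[C]_D := diag_mx (\row_s mix_phase j b s).

Definition mix_family (p : 'I_(N * D)) := branch_mix (ui p).1 (ui p).2.

Definition mix_state : 'cV[C]_(N * D) := \col_p (hsnorm (mix_family p) / 2).

Lemma mix_phase_unit j b s : (mix_phase j b s)^* * mix_phase j b s = 1.
Proof.
rewrite /mix_phase; case: b; last by rewrite rmorph1 mulr1.
rewrite rmorphM rmorph_sign /= conjCK mulrACA -expr2 sqrr_sign mul1r mulrC.
exact: phase_unit.
Qed.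

Lemma mix_unitary_unitary j b : unitary (mix_unitary j b).
Proof.
rewrite /unitary /mix_unitary adj_diag !mulmx_diag -diag_const_mx.
by split; congr diag_mx; apply/rowP => s; rewrite !mxE ?mix_phase_unit // mulrC mix_phase_unit.
Qed.

Lemma mix_family_orth p q : p != q -> hsdot (mix_family p) (mix_family q) = 0.
Proof.
case: (mxtens_indexP p) => j s; case: (mxtens_indexP q) => k t.
by rewrite mxtens_index_eq /mix_family !mxtens_indexK; apply: branch_mix_orth.
Qed.

Lemma ctrl_mix_state x p :
  (ctrlU mix_unitary x *m mix_state) p 0 =
  mix_phase (ui p).1 (x (ui p).1) (ui p).2 / 2 * hsnorm (mix_family p).
Proof.
rewrite (ctrlU_diag (fun j b => \row_s mix_phase j b s)) mul_diag_mx !mxE.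
by rewrite mulrA mulrAC.
Qed.

Lemma mix_family_sum (x : {ffun 'I_N -> bool}) :
  \sum_p (mix_phase (ui p).1 (x (ui p).1) (ui p).2 / 2) *: mix_family p =
  ctrlU U x *m A.
Proof.
rewrite sum_mxtens /ctrlU mulmx_suml; apply: eq_bigr => j _.
by under eq_bigr do rewrite /mix_family !mxtens_indexK /=; apply: branch_mix_sum.
Qed.

Variable Pi : bool -> 'M[C]_(N * d).

Lemma mix_behavior a x :
  hsdot (ctrlU mix_unitary x *m mix_state)
        (gram_povm mix_family Pi a *m (ctrlU mix_unitary x *m mix_state)) =
  hsdot (ctrlU U x *m A) (Pi a *m (ctrlU U x *m A)).
Proof. by rewrite (gram_povm_behavior _ _ (ctrl_mix_state x)) mix_family_sum. Qed.

Lemma mix_state_norm :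
  Pi false + Pi true = 1%:M -> hsdot A A = 1 -> hsdot mix_state mix_state = 1.
Proof.
(* Summing the behaviour identity over both outcomes gives the norm identity. *)
move=> Pi_sum A_norm; pose x : {ffun 'I_N -> bool} := [ffun=> false].
rewrite -(hsdot_unitary _ (ctrlU_unitary x mix_unitary_unitary)).
rewrite -(hsdot_povm_sum _ (gram_povm_sum mix_family_orth Pi_sum)) !mix_behavior.
by rewrite hsdot_povm_sum // hsdot_unitary // ctrlU_unitary.
Qed.

End Construction.

Theorem Q_N1_sub (R : realType) (N d D' : nat) (P : behavior R N) :
  Q_N1 d P -> Q_N1 D'.+2 P.
Proof.
case=> rho [U [Pi [[rho_psd rho_tr] [U_unitary [[Pi0 [Pi1 Pi_sum]] P_eq]]]]].
have [A rhoE] := psd_factor rho_psd.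
have A_norm : hsdot A A = 1 by rewrite /hsdot mxtrace_mulC -rhoE.
exists (mix_state D' U A *m adj (mix_state D' U A)), (mix_unitary D' U A),
  (gram_povm (mix_family U A) Pi).
split; [split|split; [|split; [split; [|split]|]]].
- exact: psd_mul_adj.
- by rewrite mxtrace_mulC; apply: (mix_state_norm D' U_unitary Pi_sum).
- exact: mix_unitary_unitary.
- exact: gram_povm_psd.
- exact: gram_povm_psd.
- by apply: gram_povm_sum Pi_sum; apply: mix_family_orth.
- by move=> a x; rewrite P_eq rhoE !trace_sandwich mix_behavior.
Qed.

Theorem lemma3 (R : realType) (N d : nat) :
  (1 <= N)%N -> (1 <= d)%N ->
  forall P : behavior R N, @Q_N1 R N d P -> @Q_N1 R N N.+1 P.
Proof. by case: N => [//|N] _ _ P; apply: Q_N1_sub. Qed.
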